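(* Let $t$ be a positive integer, let $M$ be a $t$-spike of order $r$ with associated partition $(A_1,\ldots,A_r)$, and let $C$ be a circuit of $M$. Then either (1) $C = \bigcup_{j \in J}A_j$ for some $t$-element set $J \subseteq \{1,\dots,r\}$, or (2) $\left|\{i \in \{1,\dots,r\} : A_i \cap C \neq \emptyset\}\right| \ge r-(t-2)$ and $\left|\{i \in \{1,\dots,r\} : A_i \subseteq C\}\right| < t$.
   Context: For a positive integer $t$, a matroid $M$ is a $t$-spike of order $r$ (where $r\ge t$) if there is a partition $(A_1,\ldots,A_r)$ of $E(M)$ into 2-element sets, called the associated partition, such that, for every $t$-element subset $J\subseteq\{1,\dots,r\}$, the set $\bigcup_{j\in J}A_j$ is both a circuit and a cocircuit of $M$. *)

From mathcomp Require Import all_boot.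
Unset Printing Implicit Defensive.

Definition is_matroid (T : finType) (I : {set T} -> bool) : Prop :=
  [/\ I set0,
      (forall X Y : {set T}, Y \subset X -> I X -> I Y) &
      (forall X Y : {set T}, I X -> I Y -> #|X| < #|Y| ->
         exists2 y, y \in Y :\: X & I (y |: X))].

Definition is_basis (T : finType) (I : {set T} -> bool) (B : {set T}) : bool :=
  maxset I B.

Definition is_circuit (T : finType) (I : {set T} -> bool) (C : {set T}) : bool :=
  minset (fun X => ~~ I X) C.

(* cocircuits: circuits of the dual matroid, i.e. minimal sets meeting every basis *)
Definition is_cocircuit (T : finType) (I : {set T} -> bool) (D : {set T}) : bool :=
  minset (fun X => [forall B : {set T}, is_basis T I B ==> (X :&: B != set0)]) D.

Definition is_spike (T : finType) (I : {set T} -> bool) (t r : nat)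
    (A : 'I_r -> {set T}) : Prop :=
  [/\ 0 < t /\ t <= r,
      (forall i, #|A i| = 2),
      (forall i j, i != j -> [disjoint A i & A j]),
      \bigcup_(i < r) A i = [set: T] &
      (forall J : {set 'I_r}, #|J| = t ->
         is_circuit T I (\bigcup_(j in J) A j) /\ is_cocircuit T I (\bigcup_(j in J) A j))].

From mathcomp Require Import all_boot.
From mathcomp Require Import zify.

Set Implicit Arguments.
Unset Strict Implicit.

(* If [C] contains [t] blocks, it contains a [t]-block circuit and so equals
   it by minimality.  Otherwise [C] is not a union of blocks, since it would be
   a proper subset of a [t]-block circuit; hence some block [A p] meets [C] in
   a single element [e].  If fewer than [r - (t - 2)] blocks met [C], then
   [A p] together with [t - 1] blocks avoiding [C] would be a cocircuit
   meeting the circuit [C] exactly in [e], which is impossible in a matroid. *)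

Lemma exists_subset_card (U : finType) (K : {set U}) n :
  n <= #|K| -> exists2 J : {set U}, J \subset K & #|J| = n.
Proof.
rewrite -bin_gt0 -cards_draws => /card_gt0P [J].
by rewrite inE => /andP [JK /eqP cardJ]; exists J.
Qed.

Lemma exists_between_card (U : finType) (K L : {set U}) n :
  K \subset L -> #|K| <= n <= #|L| ->
  exists J : {set U}, [/\ K \subset J, J \subset L & #|J| = n].
Proof.
move=> KL /andP [Kn nL].
have [|W WLK cardW] := exists_subset_card (K := L :\: K) (n := #|L| - n).
  by rewrite cardsDS //; lia.
have WL : W \subset L := subset_trans WLK (subsetDl L K).
exists (L :\: W); split; last by rewrite cardsDS // cardW; lia.
- apply/subsetP => x xK; rewrite inE (subsetP KL) // andbT.
  by apply: contraL xK => /(subsetP WLK); rewrite inE => /andP [].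
- exact: subsetDl.
Qed.

Section Matroid.
Variables (T : finType) (I : {set T} -> bool).
Hypothesis matroidI : is_matroid T I.

Let indepS (X Y : {set T}) : Y \subset X -> I X -> I Y.
Proof. by case: matroidI => _ + _; apply. Qed.

Let indep_augment (X Y : {set T}) :
  I X -> I Y -> #|X| < #|Y| -> exists2 y, y \in Y :\: X & I (y |: X).
Proof. by case: matroidI => _ _; apply. Qed.

Lemma basis_card_le (B B' : {set T}) :
  is_basis T I B -> is_basis T I B' -> #|B| <= #|B'|.
Proof.
move=> basisB basisB'; rewrite leqNgt; apply/negP => ltB'B.
have [y /setDP [_ yB'] Iy] := indep_augment (maxsetp basisB') (maxsetp basisB) ltB'B.
by move: yB'; rewrite -(maxsetsup basisB' Iy (subsetUr _ _)) setU11.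
Qed.

Lemma basis_of_card_ge (X B : {set T}) :
  I X -> is_basis T I B -> #|B| <= #|X| -> is_basis T I X.
Proof.
move=> IX basisB leBX; have [B' basisB' XB'] := maxset_exists (P := I) IX.
suff -> : X = B' by [].
by apply/eqP; rewrite eqEcard XB' (leq_trans (basis_card_le basisB' basisB)).
Qed.

Lemma circuitD1_indep (C : {set T}) e : is_circuit T I C -> e \in C -> I (C :\ e).
Proof.
move=> circuitC eC; apply/negPn/negP => /(minsetinf circuitC)/(_ (subD1set C e)).
by move/setP/(_ e); rewrite eC setD11.
Qed.

Lemma cocircuit_meets_basis (D B : {set T}) :
  is_cocircuit T I D -> is_basis T I B -> D :&: B != set0.
Proof. by move=> /minsetp/forallP/(_ B)/implyP; apply. Qed.

Lemma cocircuitD1_avoids_basis (D : {set T}) e :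
  is_cocircuit T I D -> e \in D ->
  exists2 B, is_basis T I B & [disjoint D :\ e & B].
Proof.
move=> cocircuitD eD.
have : ~~ [forall B, is_basis T I B ==> ((D :\ e) :&: B != set0)].
  apply/negP => /(minsetinf cocircuitD)/(_ (subD1set D e)).
  by move/setP/(_ e); rewrite eD setD11.
by case/forallPn => B; rewrite negb_imply negbK setI_eq0 => /andP [? ?]; exists B.
Qed.

(* Extend [C :\ e] to a maximal independent set [B1] avoiding [D]: it is not a
   basis, so a basis avoiding [D :\ e] augments it, necessarily by [e]. *)
Lemma circuit_cocircuitI_neq_set1 (C D : {set T}) e :
  is_circuit T I C -> is_cocircuit T I D -> C :&: D != [set e].
Proof.
move=> circuitC cocircuitD; apply/eqP => CDe.
have /setIP [eC eD] : e \in C :&: D by rewrite CDe set11.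
have [B0 basisB0 DB0] := cocircuitD1_avoids_basis cocircuitD eD.
have start : I (C :\ e) && [disjoint C :\ e & D].
  by rewrite circuitD1_indep //= -setI_eq0 setIDAC CDe setDv eqxx.
have [B1 maxB1 CB1] := maxset_exists (P := fun X => I X && [disjoint X & D]) start.
have /andP [IB1 B1D] := maxsetp maxB1.
have ltB1B0 : #|B1| < #|B0|.
  rewrite ltnNge; apply/negP => /(basis_of_card_ge IB1 basisB0) basisB1.
  have := cocircuit_meets_basis cocircuitD basisB1.
  by rewrite setIC setI_eq0 B1D.
have [y /setDP [yB0 yB1] Iy] := indep_augment IB1 (maxsetp basisB0) ltB1B0.
case: (boolP (y \in D)) => yD.
- have ye : y = e.
    by apply/eqP; have := disjointFl DB0 yB0; rewrite !inE yD andbT => /negbFE.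
  have : I C by apply: indepS Iy; rewrite -(setD1K eC) ye setUS.
  by rewrite (negbTE (minsetp circuitC)).
- have yB1D : I (y |: B1) && [disjoint y |: B1 & D].
    by rewrite Iy disjoints_subset subUset sub1set inE yD -disjoints_subset.
  by move: yB1; rewrite -(maxsetsup maxB1 yB1D (subsetUr _ _)) setU11.
Qed.

End Matroid.

Section Spike.
Variables (T : finType) (I : {set T} -> bool) (t r : nat) (A : 'I_r -> {set T}).
Hypothesis matroidI : is_matroid T I.
Hypothesis spikeA : is_spike T I t r A.
Variable C : {set T}.
Hypothesis circuitC : is_circuit T I C.

Local Notation full := [set i | A i \subset C].
Local Notation met := [set i | A i :&: C != set0].

Let t_gt0 : 0 < t. Proof. by case: spikeA => -[]. Qed.

Let card_block i : #|A i| = 2. Proof. by case: spikeA. Qed.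

Let cover_blocks : \bigcup_(i < r) A i = [set: T]. Proof. by case: spikeA. Qed.

Let circuit_blocks (J : {set 'I_r}) : #|J| = t -> is_circuit T I (\bigcup_(j in J) A j).
Proof. by case: spikeA => _ _ _ _ /(_ J) + cardJ => /(_ cardJ) []. Qed.

Let cocircuit_blocks (J : {set 'I_r}) :
  #|J| = t -> is_cocircuit T I (\bigcup_(j in J) A j).
Proof. by case: spikeA => _ _ _ _ /(_ J) + cardJ => /(_ cardJ) []. Qed.

Lemma spike_circuit_of_full_blocks :
  t <= #|full| -> exists J : {set 'I_r}, #|J| = t /\ C = \bigcup_(j in J) A j.
Proof.
move=> tfull; have [J Jfull cardJ] := exists_subset_card tfull.
exists J; split => //; symmetry; apply: (minsetinf circuitC).
  exact: minsetp (circuit_blocks cardJ).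
by apply/bigcupsP => j /(subsetP Jfull); rewrite inE.
Qed.

Lemma circuit_sub_met_blocks : C \subset \bigcup_(i in met) A i.
Proof.
apply/subsetP => x xC; have : x \in \bigcup_(i < r) A i by rewrite cover_blocks.
case/bigcupP => i _ xAi; apply/bigcupP; exists i => //.
by rewrite inE; apply/set0Pn; exists x; rewrite inE xAi.
Qed.

Lemma spike_circuit_split_block :
  #|full| < t -> exists2 p, p \in met & p \notin full.
Proof.
move=> fullt; apply/exists_inP; apply: contraT => /exists_inPn metfull.
have [|J [fullJ _ cardJ]] := exists_between_card (n := t) (subsetT full).
  by case: spikeA => -[_ tr] *; rewrite (ltnW fullt) cardsT card_ord.
have CJ : C \subset \bigcup_(j in J) A j.
  apply: subset_trans circuit_sub_met_blocks _; apply/bigcupsP => i imet.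
  by apply: (bigcup_max i) => //; apply/(subsetP fullJ)/negbNE/metfull.
have eqCJ := minsetinf (circuit_blocks cardJ) (minsetp circuitC) CJ.
suff /subset_leq_card : J \subset full by rewrite cardJ leqNgt fullt.
by apply/subsetP => j jJ; rewrite inE eqCJ (bigcup_max j).
Qed.

Lemma card_split_blockI p : p \in met -> p \notin full -> #|A p :&: C| = 1.
Proof.
rewrite !inE -card_gt0 -setD_eq0 -card_gt0 => meet notsub.
by have := cardsID C (A p); rewrite card_block; lia.
Qed.

Lemma card_met_blocks_of_split_block p :
  p \in met -> p \notin full -> r + 2 <= #|met| + t.
Proof.
move=> pmet pfull; rewrite leqNgt; apply/negP => small.
have pL : [set p] \subset p |: ~: met by rewrite sub1set setU11.
have [|J [pJ JL cardJ]] := exists_between_card (n := t) pL.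
  rewrite cards1 t_gt0 cardsU1 in_setC pmet /= -(leq_add2l #|met|).
  by rewrite addnCA cardsC card_ord; lia.
have /eqP/cards1P [e eCp] := card_split_blockI pmet pfull.
apply/negP: (circuit_cocircuitI_neq_set1 matroidI e circuitC (cocircuit_blocks cardJ)).
rewrite negbK -eCp; apply/eqP/setP => x; rewrite !inE.
apply/andP/andP => [[xC /bigcupP [j jJ xAj]] | [xAp xC]]; split => //.
- move: (subsetP JL j jJ); rewrite !inE negbK => /orP [/eqP <- //|].
  by move/eqP/setP/(_ x); rewrite !inE xAj xC.
- by apply/bigcupP; exists p => //; rewrite (subsetP pJ) ?set11.
Qed.

End Spike.

Theorem lemma6p3 (T : finType) (I : {set T} -> bool) (t r : nat)
    (A : 'I_r -> {set T}) (C : {set T}) :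
  0 < t -> is_matroid T I -> is_spike T I t r A -> is_circuit T I C ->
  (exists J : {set 'I_r}, #|J| = t /\ C = \bigcup_(j in J) A j) \/
  (* |{i : A_i meets C}| >= r - (t - 2), written over nat without truncation *)
  (r + 2 <= #|[set i | A i :&: C != set0]| + t /\
   #|[set i | A i \subset C]| < t).
Proof.
move=> _ matroidI spikeA circuitC.
have [tfull | fullt] := leqP t #|[set i | A i \subset C]|.
  left; exact: (spike_circuit_of_full_blocks spikeA circuitC tfull).
right; split => //.
have [p pmet pfull] := spike_circuit_split_block spikeA circuitC fullt.
exact: (card_met_blocks_of_split_block matroidI spikeA circuitC pmet pfull).
Qed.
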